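(* Let $\mathcal F=(F,\rightarrowtail)$ be a finite argumentation framework. If $A\subseteq F$ is weakly admissible, then $A$ is contained in some weakly complete extension of $\mathcal F$.
   Context: An argumentation framework $\mathcal F=(F,\rightarrowtail)$ consists of a finite set $F$ of arguments and an attack relation $\rightarrowtail\subseteq F\times F$. An argument $y$ attacks a set $A$ if $y\rightarrowtail a$ for some $a\in A$; $A^+=\{x\in F:\exists a\in A,\ a\rightarrowtail x\}$. A set is conflict-free if none of its elements attacks one of its elements. For $A\subseteq F$, the $A$-reduct $\mathcal F^A$ is the restriction of $\mathcal F$ to $F\setminus(A\cup A^+)$. Weak admissibility (defined recursively on the size of the framework): $A\subseteq F$ is weakly admissible in $\mathcal F$ if $A$ is conflict-free and for every $y\in F$ attacking $A$, $y$ belongs to no weakly admissible set of $\mathcal F^A$. A weakly complete labeling is a map $L:F\to\{\mathtt{in},\mathtt{out},\mathtt{undec}\}$ such that for every $a\in F$: if $L(a)=\mathtt{in}$ then no attacker of $a$ is labeled $\mathtt{in}$; if $L(a)=\mathtt{out}$ then some attacker of $a$ is labeled $\mathtt{in}$; if $L(a)=\mathtt{undec}$ then some attacker of $a$ is labeled $\mathtt{undec}$ and no attacker of $a$ is labeled $\mathtt{in}$. A set is a weakly complete extension if it equals $\{a:L(a)=\mathtt{in}\}$ for some weakly complete labeling $L$. *)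

(* An argumentation framework is represented by a finite type
   T, a finite set of arguments F : {set T} and an attack relation att : rel T;
   the framework is (F, att restricted to F). *)
From mathcomp Require Import all_boot.
Set Implicit Arguments.
Unset Strict Implicit.
Unset Printing Implicit Defensive.

Section AF.
Variable T : finType.
Variable att : rel T.

Definition conflict_free (A : {set T}) : bool :=
  [forall a in A, forall b in A, ~~ att a b].

Definition attacks_set (y : T) (A : {set T}) : bool := [exists a in A, att y a].

Definition att_plus (F A : {set T}) : {set T} :=
  [set x in F | [exists a in A, att a x]].

Definition reduct (F A : {set T}) : {set T} := F :\: (A :|: att_plus F A).

(* Weak admissibility, by recursion on a fuel bounding the size of the
   framework (each recursive call is on a reduct by a nonempty set, hence on
   a strictly smaller framework, so fuel #|F| suffices). *)
Fixpoint wadm_fuel (n : nat) (F A : {set T}) : bool :=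
  match n with
  | 0 => (A \subset F) && conflict_free A
  | n'.+1 =>
      [&& A \subset F, conflict_free A &
        [forall y in F, attacks_set y A ==>
           ~~ [exists B : {set T}, wadm_fuel n' (reduct F A) B && (y \in B)]]]
  end.

Definition weakly_admissible (F A : {set T}) : bool := wadm_fuel #|F| F A.

Inductive label := lab_in | lab_out | lab_undec.

Definition weakly_complete_labeling (F : {set T}) (L : T -> label) : Prop :=
  forall a, a \in F ->
    (L a = lab_in -> forall b, b \in F -> att b a -> L b <> lab_in) /\
    (L a = lab_out -> exists2 b, b \in F & att b a /\ L b = lab_in) /\
    (L a = lab_undec ->
       (exists2 b, b \in F & att b a /\ L b = lab_undec) /\
       (forall b, b \in F -> att b a -> L b <> lab_in)).

Definition is_in (l : label) : bool := if l is lab_in then true else false.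

Definition weakly_complete_extension (F E : {set T}) : Prop :=
  exists L, weakly_complete_labeling F L /\ E = [set a in F | is_in (L a)].
End AF.

(* If A is weakly admissible,
   so is A together with any weakly admissible set of the reduct F^A; hence a
   weakly complete labeling of F^A whose in-set is weakly admissible extends,
   by labeling A in and the attacked arguments out, to such a labeling of F.
   For A empty, either some nonempty weakly admissible set exists (and we use
   it instead), or every argument of F has an attacker in F, and labeling
   everything undec is weakly complete. *)
From mathcomp Require Import all_boot.
Set Implicit Arguments.
Unset Strict Implicit.
Unset Printing Implicit Defensive.

Section WeakAdmissibility.
Variable T : finType.
Variable att : rel T.
Local Notation wadm := (weakly_admissible att).
Local Notation reduct := (reduct att).

Lemma attacks_setP y (A : {set T}) :
  reflect (exists2 a, a \in A & att y a) (attacks_set att y A).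
Proof. by apply: (iffP existsP) => [[a /andP[]]|[a ? ?]]; exists a => //; apply/andP. Qed.

Lemma attacks_set_mem y a (A : {set T}) : a \in A -> att y a -> attacks_set att y A.
Proof. by move=> aA ya; apply/attacks_setP; exists a. Qed.

Lemma attacks_set0 y : attacks_set att y set0 = false.
Proof. by apply/attacks_setP => -[a]; rewrite inE. Qed.

Lemma conflict_freeP (A : {set T}) :
  reflect {in A &, forall a b, ~~ att a b} (conflict_free att A).
Proof.
apply: (iffP forallP) => [cfA a b aA bA|cfA a].
  by move: (cfA a); rewrite aA => /forallP/(_ b); rewrite bA.
by apply/implyP => aA; apply/forallP => b; apply/implyP; apply: cfA.
Qed.

Lemma reductP (F A : {set T}) x :
  reflect [/\ x \in F, x \notin A & forall a, a \in A -> ~~ att a x]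
          (x \in reduct F A).
Proof.
rewrite !inE; apply: (iffP idP).
  case/andP=> /norP[xA /nandP xAplus] xF; split=> // a aA; apply/negP=> ax.
  by case: xAplus; [rewrite xF | move/existsPn/(_ a); rewrite aA ax].
case=> xF xA xfree; rewrite xF (negbTE xA) andbT; apply/existsPn => a.
by apply/negP=> /andP[aA ax]; move: (xfree a aA); rewrite ax.
Qed.

Lemma reduct_sub (F A : {set T}) : reduct F A \subset F.
Proof. by apply/subsetP=> x /reductP[]. Qed.

Lemma card_reduct_lt (F A : {set T}) :
  A \subset F -> A != set0 -> #|reduct F A| < #|F|.
Proof.
move=> AF /set0Pn[a aA]; apply: proper_card; apply/properP; split; first exact: reduct_sub.
by exists a; [apply: (subsetP AF) | apply/negP => /reductP[_]; rewrite aA].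
Qed.

Lemma reductU (F A B : {set T}) : reduct F (A :|: B) = reduct (reduct F A) B.
Proof.
apply/setP=> x; apply/reductP/reductP.
  case=> xF; rewrite in_setU negb_or => /andP[xA xB] xfree.
  split=> // [|b bB]; last by apply: xfree; rewrite inE bB orbT.
  by apply/reductP; split=> // a aA; apply: xfree; rewrite inE aA.
case=> /reductP[xF xA xfreeA] xB xfreeB; split=> //; first by rewrite inE negb_or xA.
by move=> a; rewrite inE => /orP[]; [apply: xfreeA | apply: xfreeB].
Qed.

Lemma wadm_fuelSE n (F A : {set T}) :
  wadm_fuel att n.+1 F A =
  [&& A \subset F, conflict_free att A &
    [forall y in F, attacks_set att y A ==>
       ~~ [exists B : {set T}, wadm_fuel att n (reduct F A) B && (y \in B)]]].
Proof. by []. Qed.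

Lemma wadm_fuelS n (F A : {set T}) :
  #|F| <= n -> wadm_fuel att n.+1 F A = wadm_fuel att n F A.
Proof.
elim: n F A => [|n IH] F A.
  rewrite leqn0 cards_eq0 => /eqP ->; rewrite wadm_fuelSE /=.
  by case: (_ \subset _) (conflict_free _ _) => [] [] //=; apply/forallP=> y; rewrite inE.
move=> leFn; rewrite wadm_fuelSE [RHS]wadm_fuelSE.
case AF: (A \subset F) => //; congr (_ && (_ && _)); apply: eq_forallb_in => y _.
have [-> | A0] := eqVneq A set0; first by rewrite attacks_set0.
have ltRn : #|reduct F A| <= n by rewrite -ltnS (leq_trans (card_reduct_lt AF A0)).
by congr (_ ==> ~~ _); apply: eq_existsb => B; rewrite IH.
Qed.

Lemma wadm_fuel_ge n (F A : {set T}) :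
  #|F| <= n -> wadm_fuel att n F A = wadm F A.
Proof.
elim: n => [|n IH]; first by rewrite leqn0 => /eqP <-.
by rewrite leq_eqVlt => /orP[/eqP <- // | leFn]; rewrite wadm_fuelS // IH.
Qed.

Lemma wadmP (F A : {set T}) :
  reflect [/\ A \subset F, conflict_free att A &
             forall y B, y \in F -> attacks_set att y A ->
               wadm (reduct F A) B -> y \notin B]
          (wadm F A).
Proof.
rewrite -(wadm_fuel_ge A (leqnSn #|F|)) wadm_fuelSE.
apply: (iffP and3P) => -[AF cfA attackers]; split=> //.
  move=> y B yF yA wB; move/forallP/(_ y): attackers; rewrite yF yA /=.
  by move/existsPn/(_ B); rewrite wadm_fuel_ge ?wB // (subset_leq_card (reduct_sub F A)).
apply/forall_inP => y yF; apply/implyP => yA; apply/existsPn => B.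
rewrite wadm_fuel_ge ?(subset_leq_card (reduct_sub F A)) //.
by apply/negP => /andP[wB yB]; move: (attackers y B yF yA wB); rewrite yB.
Qed.

Lemma wadm_sub (F A : {set T}) : wadm F A -> A \subset F.
Proof. by case/wadmP. Qed.

Lemma wadm0 (F : {set T}) : wadm F set0.
Proof.
apply/wadmP; split=> [||y B _]; rewrite ?sub0set ?attacks_set0 //.
by apply/conflict_freeP => a b; rewrite inE.
Qed.

Lemma wadm1 (F : {set T}) x :
  x \in F -> (forall y, y \in F -> ~~ att y x) -> wadm F [set x].
Proof.
move=> xF unattacked; apply/wadmP; split=> [||y B yF].
- by rewrite sub1set.
- by apply/conflict_freeP => a b; rewrite !inE => /eqP -> /eqP ->; apply: unattacked.
- by case/attacks_setP => z; rewrite inE => /eqP ->; rewrite (negbTE (unattacked y yF)).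
Qed.

(* If y attacks A, a weakly admissible set of F^A containing y would refute
   A; for y attacking B we argue in F^A, whose size is smaller as soon as A
   is nonempty. *)
Lemma wadmU (F A B : {set T}) :
  wadm F A -> wadm (reduct F A) B -> wadm F (A :|: B).
Proof.
have [n] := ubnP #|F|; elim: n F A B => // n IH F A B /ltnSE leFn wA wB.
case/wadmP: (wA) => AF cfA attA; case/wadmP: (wB) => BR cfB attB.
have BF : B \subset F := subset_trans BR (reduct_sub F A).
apply/wadmP; split.
- by rewrite subUset AF BF.
- apply/conflict_freeP => a b; rewrite !inE => /orP[aA|aB] /orP[bA|bB].
  + exact: (conflict_freeP _ cfA).
  + by case/reductP: (subsetP BR b bB) => _ _; apply.
  + by apply/negP=> ab; case/negP: (attA a B (subsetP BF a aB) (attacks_set_mem bA ab) wB).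
  + exact: (conflict_freeP _ cfB).
move=> y C yF /attacks_setP[x]; rewrite inE reductU => /orP[xA | xB] yx wC.
  have A0 : A != set0 by apply/set0Pn; exists x.
  have ltRn : #|reduct F A| < n by apply: leq_trans (card_reduct_lt AF A0) leFn.
  apply: contra (attA y _ yF (attacks_set_mem xA yx) (IH _ _ _ ltRn wB wC)).
  by rewrite inE => ->; rewrite orbT.
apply/negP => yC; have /reductP[yR _ _] := subsetP (wadm_sub wC) y yC.
by case/negP: (attB y C yR (attacks_set_mem xB yx) wC).
Qed.

Lemma notin_reduct_attacked (F A : {set T}) x :
  x \in F -> x \notin A -> x \notin reduct F A -> exists2 a, a \in A & att a x.
Proof.
move=> xF xA xR; apply/exists_inP; apply: contraNT xR => /exists_inPn unattacked.
by apply/reductP; split.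
Qed.

End WeakAdmissibility.

Section Labelings.
Variable T : finType.
Variable att : rel T.
Local Notation wadm := (weakly_admissible att).
Local Notation reduct := (reduct att).
Local Notation wcl := (weakly_complete_labeling att).

Definition in_args (F : {set T}) (L : T -> label) : {set T} :=
  [set a in F | is_in (L a)].

Lemma in_argsE (F : {set T}) L x : (x \in in_args F L) = (x \in F) && is_in (L x).
Proof. by rewrite inE. Qed.

Definition wadm_wcl_above (F A : {set T}) : Prop :=
  exists L, [/\ wcl F L, A \subset in_args F L & wadm F (in_args F L)].

Section Glue.
Variables (F A : {set T}) (L' : T -> label).
Hypothesis wA : wadm F A.
Hypothesis wclL' : wcl (reduct F A) L'.
Hypothesis wadm_inL' : wadm (reduct F A) (in_args (reduct F A) L').

Definition glue_labeling x : label :=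
  if x \in A then lab_in else if x \in reduct F A then L' x else lab_out.
Local Notation L := glue_labeling.

Lemma glue_reduct x : x \in reduct F A -> L x = L' x.
Proof. by rewrite /L => xR; case/reductP: (xR) => _ /negbTE -> _; rewrite xR. Qed.

Lemma in_args_glue : in_args F L = A :|: in_args (reduct F A) L'.
Proof.
apply/setP => x; rewrite in_setU !in_argsE /L.
case: ifP => [xA | _]; first by rewrite (subsetP (wadm_sub wA)).
case: ifP => [xR | _]; last by rewrite andbF.
by case/reductP: (xR) => ->.
Qed.

Lemma glue_no_in_attacker a b :
  a \in F -> b \in F -> att b a -> L a <> lab_out -> L b <> lab_in.
Proof.
case/wadmP: wA => _ /conflict_freeP cfA attA aF bF ba La Lb.
have [aA | aNA] := boolP (a \in A).
  have [bA | bNA] := boolP (b \in A); first by case/negP: (cfA _ _ bA aA).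
  have bR : b \in reduct F A by move: Lb; rewrite /L (negbTE bNA); case: ifP.
  case/negP: (attA b _ bF (attacks_set_mem aA ba) wadm_inL').
  by rewrite inE bR -(glue_reduct bR) Lb.
have aR : a \in reduct F A by move: La; rewrite /L (negbTE aNA); case: ifP.
have [bA | bNA] := boolP (b \in A); first by case/reductP: aR => _ _ /(_ b bA); rewrite ba.
have bR : b \in reduct F A by move: Lb; rewrite /L (negbTE bNA); case: ifP.
have [inL' [_ undecL']] := wclL' aR; rewrite (glue_reduct aR) in La.
rewrite (glue_reduct bR) in Lb.
case La': (L' a) La => // _; first exact: inL' La' b bR ba Lb.
by case: (undecL' La') => _ /(_ b bR ba).
Qed.

Lemma glue_wcl : wcl F L.
Proof.
have sRF := subsetP (reduct_sub att F A).
move=> a aF; have noin := glue_no_in_attacker aF.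
split; first by move=> La b bF ba; apply: noin => //; rewrite La.
split=> La.
  have [aA | aNA] := boolP (a \in A); first by move: La; rewrite /L aA.
  have [aR | aNR] := boolP (a \in reduct F A).
    rewrite glue_reduct // in La; have [b bR [ba Lb]] := (wclL' aR).2.1 La.
    by exists b; rewrite ?sRF ?glue_reduct.
  have [b bA ba] := notin_reduct_attacked aF aNA aNR.
  by exists b; rewrite ?(subsetP (wadm_sub wA)) // /L bA.
have aR : a \in reduct F A by move: La; rewrite /L; case: ifP => // _; case: ifP.
rewrite glue_reduct // in La; have [[b bR [ba Lb]] _] := (wclL' aR).2.2 La.
split; first by exists b; rewrite ?sRF ?glue_reduct.
by move=> b' bF ba'; apply: noin => //; rewrite glue_reduct // La.
Qed.
End Glue.

Lemma wadm_wcl_above_reduct (F A : {set T}) :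
  wadm F A -> wadm_wcl_above (reduct F A) set0 -> wadm_wcl_above F A.
Proof.
move=> wA [L' [wclL' _ wadm_inL']]; exists (glue_labeling F A L').
rewrite in_args_glue //; split; [exact: glue_wcl | exact: subsetUl | exact: wadmU].
Qed.

(* Without nonempty weakly admissible sets no argument is unattacked, since a
   singleton of an unattacked argument is weakly admissible. *)
Lemma wadm_wcl_above_undec (F : {set T}) :
  (forall B, wadm F B -> B = set0) -> wadm_wcl_above F set0.
Proof.
move=> only_empty; exists (fun=> lab_undec).
have -> : in_args F (fun=> lab_undec) = set0 by apply/setP => x; rewrite in_argsE andbF inE.
split=> [a aF||]; rewrite ?sub0set ?wadm0 //; split=> //; split=> // _; split=> //.
have [b /andP[bF ba] | unattacked] := pickP (fun b => (b \in F) && att b a); first by exists b.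
have /only_empty/setP/(_ a) : wadm F [set a].
  by apply: wadm1 => // b bF; move: (unattacked b); rewrite bF /= => ->.
by rewrite !inE eqxx.
Qed.

Lemma wadm_extends_to_wcl (F A : {set T}) : wadm F A -> wadm_wcl_above F A.
Proof.
have [n] := ubnP #|F|; elim: n F A => // n IH F A /ltnSE leFn.
have nonempty B : wadm F B -> B != set0 -> wadm_wcl_above F B.
  move=> wB B0; apply: wadm_wcl_above_reduct => //; apply: IH (wadm0 _ _).
  exact: leq_trans (card_reduct_lt att (wadm_sub wB) B0) leFn.
move=> wA; have [-> | ] := eqVneq A set0; last exact: nonempty.
have [B /andP[wB B0] | only_empty] := pickP (fun B => wadm F B && (B != set0)).
  by have [L [wclL _ winL]] := nonempty B wB B0; exists L; rewrite sub0set.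
by apply: wadm_wcl_above_undec => B wB; apply/eqP; move: (only_empty B); rewrite wB => /negbFE.
Qed.
End Labelings.

Theorem mainTheorem16 (T : finType) (att : rel T) (F A : {set T}) :
  weakly_admissible att F A ->
  exists E : {set T}, weakly_complete_extension att F E /\ A \subset E.
Proof.
move=> /wadm_extends_to_wcl[L [wclL AL _]].
by exists (in_args F L); split => //; exists L.
Qed.
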